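(* Let $\mathcal{X}=\mathcal{X}^{(1)}\times\cdots\times\mathcal{X}^{(d)}$ with each $\mathcal{X}^{(l)}$ finite, fix $i\in\{1,\dots,d\}$, let $\pi=\otimes_{l=1}^d\pi^{(l)}$ be a positive product distribution, let $P\in\mathcal{L}(\mathcal{X})$ be $\pi$-stationary and, for $j\ne i$, let $L_j\in\mathcal{L}(\mathcal{X}^{(j)})$ be $\pi^{(j)}$-stationary. Let $K_i:=\{(\otimes_{j<i}L_j)\otimes M\otimes(\otimes_{j>i}L_j):\ M\in\mathcal{L}(\mathcal{X}^{(i)})\ \pi^{(i)}\text{-stationary}\}$, each element identified with its edge measure $(\pi\boxtimes Q)(x,y)=\pi(x)Q(x,y)$. Let $f(t)=-\ln t$. Let $(X_n)_{n\ge1}$ be a Markov chain with transition matrix $P$ and arbitrary initial distribution, and $E_n:=\frac1n\big(\sum_{k=1}^{n-1}\delta_{(X_k,X_{k+1})}+\delta_{(X_n,X_1)}\big)$. Then $\limsup_{n\to\infty}\frac1n\ln\mathbb{P}(E_n\in K_i)\le-D_f^\pi\big(P\,\|\,(\otimes_{j<i}L_j)\otimes L^{(i)}_*\otimes(\otimes_{j>i}L_j)\big)$, where $L_*^{(i)}(x^i,y^i)\propto\prod_{x^{(-i)},y^{(-i)}}P(x,y)^{\pi(x)\mathbf{Z}(x^{(-i)},y^{(-i)})/Z(x^i,y^i)}$ (normalized over $y^i$), with $\mathbf{Z}(x^{(-i)},y^{(-i)})=\prod_{j\ne i}L_j(x^j,y^j)$ and $Z(x^i,y^i)=\sum_{x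^{(-i)},y^{(-i)}}\pi(x)\mathbf{Z}(x^{(-i)},y^{(-i)})$.
   Context: $\mathcal{L}(\Omega)$: transition matrices on finite $\Omega$. $D_f^{\pi}(M\|L):=\sum_{x}\pi(x)\sum_y L(x,y)f\big(M(x,y)/L(x,y)\big)$ with conventions $0f(0/0)=0$, $0f(a/0)=a\lim_{t\to0^+}tf(1/t)$; for $f=-\ln$ this is the reverse KL divergence $\sum_{x,y}\pi(x)L(x,y)\ln\frac{L(x,y)}{M(x,y)}$. $(\otimes_jL_j)(x,y)=\prod_jL_j(x^j,y^j)$; $x^{(-i)}=(x^j)_{j\ne i}$. $P$ is $\pi$-stationary if $\pi P=\pi$. $L^{(i)}_*$ is the unique minimizer over $L\in\mathcal{L}(\mathcal{X}^{(i)})$ of $D_f^\pi(P\|(\otimes_{j<i}L_j)\otimes L\otimes(\otimes_{j>i}L_j))$. *)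

From HB Require Import structures.
From mathcomp Require Import all_boot all_order all_algebra.
From mathcomp Require Import all_classical all_reals all_analysis.
Unset Printing Implicit Defensive.
Import Order.TTheory GRing.Theory Num.Theory.
Local Open Scope ring_scope.

Definition state {d : nat} (X : 'I_d -> finType) := {dffun forall l : 'I_d, X l}.

Section Defs.
Variables (R : realType) (d : nat) (X : 'I_d -> finType).
Notation S := (state X).

Definition is_trans (T : finType) (M : T -> T -> R) :=
  (forall x y, 0 <= M x y) /\ (forall x, \sum_y M x y = 1).
Definition is_distr (T : finType) (mu : T -> R) :=
  (forall x, 0 <= mu x) /\ \sum_x mu x = 1.
Definition is_stationary (T : finType) (p : T -> R) (M : T -> T -> R) :=
  forall y, \sum_x p x * M x y = p y.

Definition prod_distr (pil : forall l, X l -> R) (x : S) : R :=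
  \prod_l pil l (x l).

Definition tensor_at (i : 'I_d) (L : forall j, X j -> X j -> R)
  (M : X i -> X i -> R) (x y : S) : R :=
  M (x i) (y i) * \prod_(j | j != i) L j (x j) (y j).

(* reverse-KL D_f^pi(P || Q) for f = -ln, with the stated conventions:
   Q(x,y) = 0 gives 0;  Q(x,y) > 0 = P(x,y) gives +oo. *)
Definition rev_kl_term (p q : R) : \bar R :=
  if q == 0 then 0%E else if p == 0 then +oo%E else (q * ln (q / p))%:E.
Definition Df_revKL (T : finType) (pi : T -> R) (P Q : T -> T -> R) : \bar R :=
  (\sum_(x : T) \sum_(y : T) (pi x)%:E * rev_kl_term (P x y) (Q x y))%E.

Definition Zbold (i : 'I_d) (L : forall j, X j -> X j -> R) (x y : S) : R :=
  \prod_(j | j != i) L j (x j) (y j).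
Definition Zi (i : 'I_d) (pi : S -> R) (L : forall j, X j -> X j -> R)
  (a b : X i) : R :=
  \sum_(x : S | x i == a) \sum_(y : S | y i == b) pi x * Zbold i L x y.
Definition Lstar_w (i : 'I_d) (pi : S -> R) (P : S -> S -> R)
  (L : forall j, X j -> X j -> R) (a b : X i) : R :=
  \prod_(x : S | x i == a) \prod_(y : S | y i == b)
     P x y `^ (pi x * Zbold i L x y / Zi i pi L a b).
Definition Lstar (i : 'I_d) (pi : S -> R) (P : S -> S -> R)
  (L : forall j, X j -> X j -> R) (a b : X i) : R :=
  Lstar_w i pi P L a b / \sum_(b' : X i) Lstar_w i pi P L a b'.

(* Markov chain paths of length n+1 : X_1, ..., X_{n+1} (indices 0..n) *)
Definition path_prob (n : nat) (mu : S -> R) (P : S -> S -> R)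
  (w : {ffun 'I_n.+1 -> S}) : R :=
  mu (w ord0) * \prod_(k < n) P (w (inord k)) (w (inord k.+1)).

(* closed empirical pair measure E_{n+1} of the path w *)
Definition emp_pair (n : nat) (w : {ffun 'I_n.+1 -> S}) (x y : S) : R :=
  ((\sum_(k < n) ((w (inord k) == x) && (w (inord k.+1) == y))%:R)
   + ((w ord_max == x) && (w ord0 == y))%:R) / n.+1%:R.

Definition in_Ki (i : 'I_d) (pil : forall l, X l -> R)
  (L : forall j, X j -> X j -> R) (E : S -> S -> R) : Prop :=
  exists M : X i -> X i -> R, is_trans _ M /\ is_stationary _ (pil i) M /\
    forall x y, E x y = prod_distr pil x * tensor_at i L M x y.

Definition prob_Ki (n : nat) (i : 'I_d) (pil : forall l, X l -> R)
  (L : forall j, X j -> X j -> R) (mu : S -> R) (P : S -> S -> R) : R :=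
  \sum_(w : {ffun 'I_n.+1 -> S} | `[< in_Ki i pil L (emp_pair n w) >])
     path_prob n mu P w.

Definition eln (p : R) : \bar R := if p == 0 then -oo%E else (ln p)%:E.

End Defs.

Arguments is_trans {R T} M.
Arguments is_distr {R T} mu.
Arguments is_stationary {R T} p M.
Arguments prod_distr {R d X} pil x.
Arguments tensor_at {R d X} i L M x y.
Arguments rev_kl_term {R} p q.
Arguments Df_revKL {R T} pi P Q.
Arguments Zbold {R d X} i L x y.
Arguments Zi {R d X} i pi L a b.
Arguments Lstar_w {R d X} i pi P L a b.
Arguments Lstar {R d X} i pi P L a b.
Arguments path_prob {R d X} n mu P w.
Arguments emp_pair {R d X} n w x y.
Arguments in_Ki {R d X} i pil L E.
Arguments prob_Ki {R d X} n i pil L mu P.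
Arguments eln {R} p.

From HB Require Import structures.
From mathcomp Require Import all_boot all_order all_algebra.
From mathcomp Require Import all_classical all_reals all_analysis.
From mathcomp Require Import ring lra.
Import Order.TTheory GRing.Theory Num.Theory.
Local Open Scope ring_scope.

(** Change of measure.  If [P <= Rd * expR g] with [Rd] a positive transition
    matrix and [g] bounded, every path [w] of length [n] satisfies
    [P(w) <= Rd(w) * expR (n * <E_n(w), g> + O(1))], and the [Rd]-paths have
    total mass 1.  Take [g = ln P - ln Rd] with [Rd] a smoothing of
    [Q = (x)_j L_j (x) L_*].  The optimality of [L_*] makes the block sums
    [sum_(x^i = a, y^i = b) pi(x) Z(x,y) ln (Q(x,y) / P(x,y))] independent of [b],
    so [<pi (x) ((x)_j L_j (x) M), ln Q - ln P>] equals [D_f^pi(P || Q)] for every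
    transition matrix [M], while the smoothing costs at most [e].  Hence every
    path with [E_n] in [K_i] has probability at most [expR (- n (D - e) + C)].
    Zero entries of [P] are raised to a small [eta], chosen so that a block on
    which [L_*] vanishes already contributes more than its optimal value. *)

Lemma ler_sum_term {R : numDomainType} {T : finType} {Pr : pred T} {F : T -> R} t :
  (forall u, Pr u -> 0 <= F u) -> Pr t -> F t <= \sum_(u | Pr u) F u.
Proof.
move=> F0 Prt; rewrite (bigD1 t) //= lerDl.
by apply: sumr_ge0 => u /andP[+ _]; exact: F0.
Qed.

Lemma ler_sum2_term {R : numDomainType} {T U : finType} {Pr : pred T} {Qr : pred U}
    {F : T -> U -> R} t u :
  (forall t' u', Pr t' -> Qr u' -> 0 <= F t' u') -> Pr t -> Qr u ->
  F t u <= \sum_(t' | Pr t') \sum_(u' | Qr u') F t' u'.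
Proof.
move=> F0 Prt Qru; apply: le_trans (ler_sum_term t _ Prt) => [|t' Prt'].
  by apply: ler_sum_term => // u' Qru'; exact: F0.
by apply: sumr_ge0 => u' Qru'; exact: F0.
Qed.

Lemma exists_scale_dominating {R : realFieldType} {T : finType} {w C : T -> R} :
  (forall t, 0 <= w t) -> exists s, 0 <= s /\ forall t, 0 < w t -> C t <= w t * s.
Proof.
move=> w0; exists (\sum_t `|C t| / w t).
have term0 t : 0 <= `|C t| / w t by rewrite divr_ge0.
split=> [|t wt]; first exact: sumr_ge0.
apply: le_trans (ler_norm (C t)) _.
by rewrite mulrC -ler_pdivrMr //; apply: ler_sum_term.
Qed.

Lemma ln_prod {R : realType} {I : Type} (r : seq I) (Pr : pred I) (F : I -> R) :
  (forall k, Pr k -> 0 < F k) ->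
  ln (\prod_(k <- r | Pr k) F k) = \sum_(k <- r | Pr k) ln (F k).
Proof.
move=> F0; elim: r => [|x r IH]; first by rewrite !big_nil ln1.
rewrite !big_cons; case: ifP => // Px.
by rewrite lnM ?IH // posrE ?F0 // prodr_gt0.
Qed.

Lemma is_trans_le1 {R : realType} {T : finType} {M : T -> T -> R} :
  is_trans M -> forall x y, M x y <= 1.
Proof.
by case=> M0 M1 x y; rewrite -(M1 x); apply: ler_sum_term.
Qed.

Section ProductSpace.
Context {d : nat} {X : 'I_d -> finType}.
Local Notation S := (state X).

Lemma sum_prod_dffun {R : comPzSemiRingType} (G : forall j, X j -> R) :
  \sum_(y : S) \prod_j G j (y j) = \prod_j \sum_(c : X j) G j c.
Proof.
pose P_ j := [ffun c : X j => G j c].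
transitivity (\sum_(t : fprod X) \prod_(j in 'I_d) P_ j (t j)).
  rewrite (reindex (@dffun_of_fprod _ X)); last exact/onW_bij/dffun_of_fprod_bij.
  by apply: eq_bigr => t _; apply: eq_bigr => j _; rewrite !ffunE.
rewrite big_fprod -(bigA_distr_big_dep (tagged_with X) (fun j => untag 0 (P_ j))).
apply: eq_bigr => j _; rewrite -(big_tag P_ j).
by apply: eq_bigr => c _; rewrite ffunE.
Qed.

Lemma sum_prod_distr {R : realType} (pil : forall l, X l -> R) :
  (forall l, is_distr (pil l)) -> \sum_(x : S) prod_distr pil x = 1.
Proof. by move=> pil_distr; rewrite sum_prod_dffun; apply: big1 => l _; case: (pil_distr l). Qed.

Variable i : 'I_d.

Definition upd (y : S) (c : X i) : S :=
  [ffun j => if i =P j is ReflectT e then eq_rect i X c j e else y j].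

Lemma upd_same y c : upd y c i = c.
Proof. by rewrite ffunE; case: eqP => // e; rewrite (eq_axiomK e). Qed.

Lemma upd_other y c j : j != i -> upd y c j = y j.
Proof. by move=> ji; rewrite ffunE; case: eqP => // e; rewrite e eqxx in ji. Qed.

Lemma upd_upd y c c' : upd (upd y c) c' = upd y c'.
Proof.
apply/ffunP => j; have [->|ji] := eqVneq j i; first by rewrite !upd_same.
by rewrite !upd_other.
Qed.

Lemma upd_id y : upd y (y i) = y.
Proof.
apply/ffunP => j; have [->|ji] := eqVneq j i; first by rewrite upd_same.
by rewrite upd_other.
Qed.

Lemma sum_slice_indep {V : nmodType} (F : S -> V) (b b' : X i) :
  (forall y c, F (upd y c) = F y) ->
  \sum_(y : S | y i == b) F y = \sum_(y : S | y i == b') F y.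
Proof.
move=> Fupd; rewrite (reindex_onto (upd^~ b) (upd^~ b')); last first.
  by move=> y /eqP yb; rewrite upd_upd -yb upd_id.
apply: eq_big => [y|y _]; last by rewrite Fupd.
rewrite upd_same eqxx upd_upd /=.
by apply/eqP/eqP => [<-|<-]; rewrite ?upd_same ?upd_id.
Qed.

Lemma sum_blocks {V : nmodType} (F : X i -> X i -> S -> S -> V) :
  \sum_(x : S) \sum_(y : S) F (x i) (y i) x y =
  \sum_a \sum_b \sum_(x : S | x i == a) \sum_(y : S | y i == b) F a b x y.
Proof.
rewrite (partition_big (fun x : S => x i) predT) //=; apply: eq_bigr => a _.
rewrite [RHS]exchange_big /=; apply: eq_bigr => x /eqP xa.
rewrite (partition_big (fun y : S => y i) predT) //=; apply: eq_bigr => b _.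
by apply: eq_bigr => y /eqP yb; rewrite xa yb.
Qed.

End ProductSpace.

Section Paths.
Context {R : realType} {d : nat} {X : 'I_d -> finType}.
Local Notation S := (state X).

Definition snoc_path n (w : {ffun 'I_n.+1 -> S}) (s : S) : {ffun 'I_n.+2 -> S} :=
  [ffun k => if unlift ord_max k is Some k' then w k' else s].
Arguments snoc_path {n} w s.

Lemma snoc_path_lift n w s (k : 'I_n.+1) : snoc_path w s (lift ord_max k) = w k.
Proof. by rewrite ffunE liftK. Qed.

Lemma snoc_path_max n (w : {ffun 'I_n.+1 -> S}) s : snoc_path w s ord_max = s.
Proof. by rewrite ffunE unlift_none. Qed.

Lemma inord_lift_max n k : (k < n.+1)%N ->
  (inord k : 'I_n.+2) = lift ord_max (inord k : 'I_n.+1).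
Proof.
move=> kn; apply/val_inj; rewrite /= /bump inordK; last exact: ltnW.
by rewrite inordK // leqNgt kn.
Qed.

Lemma sum_snoc_path n (F : {ffun 'I_n.+2 -> S} -> R) :
  \sum_w F w = \sum_(w : {ffun 'I_n.+1 -> S}) \sum_(s : S) F (snoc_path w s).
Proof.
rewrite pair_big /= (reindex (fun p => snoc_path p.1 p.2)) //.
exists (fun w : {ffun 'I_n.+2 -> S} => ([ffun k : 'I_n.+1 => w (lift ord_max k)], w ord_max)).
  move=> [w s] _.
  by congr pair; [apply/ffunP => k; rewrite ffunE /= snoc_path_lift|exact: snoc_path_max].
move=> w _; apply/ffunP => k; rewrite ffunE /=; case: unliftP => [k' ->|->]; by rewrite ?ffunE.
Qed.

Lemma path_prob_snoc n mu (Q : S -> S -> R) w s :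
  path_prob n.+1 mu Q (snoc_path w s) = path_prob n mu Q w * Q (w (inord n)) s.
Proof.
have snoc0 : snoc_path w s ord0 = w ord0.
  by rewrite (_ : ord0 = lift ord_max ord0) ?snoc_path_lift //; apply: val_inj.
rewrite /path_prob big_ord_recr /= snoc0 -mulrA; congr (_ * (_ * _)).
  apply: eq_bigr => k _.
  by rewrite !inord_lift_max ?ltnS ?(ltnW (ltn_ord k)) // !snoc_path_lift.
have -> : (inord n.+1 : 'I_n.+2) = ord_max by apply/val_inj; rewrite /= inordK.
by rewrite snoc_path_max inord_lift_max // snoc_path_lift.
Qed.

Lemma path_prob_sum n mu (Q : S -> S -> R) :
  (forall x, \sum_y Q x y = 1) -> \sum_w path_prob n mu Q w = \sum_x mu x.
Proof.
move=> Q1; elim: n => [|n IH].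
  rewrite /path_prob (reindex (fun s : S => [ffun _ : 'I_1 => s])).
    by apply: eq_bigr => s _; rewrite big_ord0 mulr1 ffunE.
  exists (fun w : {ffun 'I_1 -> S} => w ord0) => [s _|w _]; first by rewrite ffunE.
  by apply/ffunP => k; rewrite ffunE (ord1 k).
rewrite sum_snoc_path -IH; apply: eq_bigr => w _.
by under eq_bigr do rewrite path_prob_snoc; rewrite -mulr_sumr Q1 mulr1.
Qed.

Lemma sum_pair_indicator (T : finType) (g : T -> T -> R) (a b : T) :
  \sum_x \sum_y ((a == x) && (b == y))%:R * g x y = g a b.
Proof.
rewrite (bigD1 a) //= [X in _ + X]big1 ?addr0 => [|x xa]; last first.
  by apply: big1 => y _; rewrite eq_sym (negbTE xa) mul0r.
rewrite (bigD1 b) //= [X in _ + X]big1 ?addr0 => [|y yb]; first by rewrite !eqxx mul1r.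
by rewrite eqxx eq_sym (negbTE yb) mul0r.
Qed.

Lemma emp_pair_sum n (w : {ffun 'I_n.+1 -> S}) (g : S -> S -> R) :
  n.+1%:R * (\sum_x \sum_y emp_pair n w x y * g x y) =
  \sum_(k < n) g (w (inord k)) (w (inord k.+1)) + g (w ord_max) (w ord0).
Proof.
rewrite mulr_sumr; under eq_bigr do rewrite mulr_sumr.
transitivity (\sum_x \sum_y
  (\sum_(k < n) ((w (inord k) == x) && (w (inord k.+1) == y))%:R * g x y +
   ((w ord_max == x) && (w ord0 == y))%:R * g x y)).
  apply: eq_bigr => x _; apply: eq_bigr => y _.
  by rewrite /emp_pair mulrA [n.+1%:R * _]mulrC divfK ?pnatr_eq0 // mulrDl mulr_suml.
under eq_bigr do rewrite big_split /=; rewrite big_split /= sum_pair_indicator.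
congr (_ + _); under eq_bigr do rewrite exchange_big /=; rewrite exchange_big /=.
by apply: eq_bigr => k _; rewrite sum_pair_indicator.
Qed.

Lemma path_prob_le_tilted n mu (P Q g : S -> S -> R) (w : {ffun 'I_n.+1 -> S}) :
  0 <= mu (w ord0) -> (forall x y, 0 <= P x y <= Q x y * expR (g x y)) ->
  path_prob n mu P w <= path_prob n mu Q w *
    expR (n.+1%:R * (\sum_x \sum_y emp_pair n w x y * g x y) - g (w ord_max) (w ord0)).
Proof.
move=> mu0 PQ; rewrite emp_pair_sum addrK expR_sum /path_prob -mulrA -big_split /=.
by rewrite ler_wpM2l //; apply: ler_prod => k _; exact: PQ.
Qed.

Lemma path_prob_ge0 n mu (Q : S -> S -> R) (w : {ffun 'I_n.+1 -> S}) :
  0 <= mu (w ord0) -> (forall x y, 0 <= Q x y) -> 0 <= path_prob n mu Q w.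
Proof. by move=> mu0 Q0; rewrite mulr_ge0 //; apply: prodr_ge0. Qed.

Lemma prob_Ki_ge0 n i pil L mu (P : S -> S -> R) :
  is_distr mu -> is_trans P -> 0 <= prob_Ki n i pil L mu P.
Proof. by move=> [mu0 _] [P0 _]; apply: sumr_ge0 => w _; exact: path_prob_ge0. Qed.

End Paths.

Lemma limn_esup_eln_le {R : realType} (p : nat -> R) (D : R) : (forall n, 0 <= p n) ->
  (forall e, 0 < e -> exists K, forall n, p n <= expR (- (n.+1%:R * (D - e)) + K)) ->
  (limn_esup (fun n => ((n.+1%:R)^-1)%:E * eln (p n)) <= (- D)%:E)%E.
Proof.
move=> p0 p_le; apply/lee_addgt0Pr => e e0.
have [K HK] := p_le _ (divr_gt0 e0 (ltr0n _ 2)).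
pose N := Num.trunc (K * 2 / e).
apply: le_trans.
  apply: ereal_inf_lbound; exists [set n : nat | (N <= n)%N]%classic; first by exists N.
  reflexivity.
apply: ge_ereal_sup => _ [n /= Nn <-].
have m0 : (0 : R) < n.+1%:R by rewrite ltr0n.
rewrite /eln; have [_|pn0] := eqVneq (p n) 0.
  by rewrite mulrNy gtr0_sg ?invr_gt0 // mul1e leNye.
have pn : 0 < p n by rewrite lt_neqAle eq_sym pn0 p0.
rewrite -EFinM -EFinD lee_fin ler_pdivrMl //.
have lnp : ln (p n) <= - (n.+1%:R * (D - e / 2)) + K.
  by rewrite -[leRHS]expRK ler_ln ?posrE ?expR_gt0.
have nK : K * 2 < n.+1%:R * e.
  rewrite -ltr_pdivrMr //; apply: lt_le_trans (truncnS_gt _) _.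
  by rewrite ler_nat ltnS.
set m := n.+1%:R in lnp nK m0 *; nra.
Qed.

Section OptimalFactor.
Context {R : realType} {d : nat} {X : 'I_d -> finType}.
Variables (i : 'I_d) (pil : forall l, X l -> R) (P : state X -> state X -> R)
  (L : forall j, X j -> X j -> R).
Hypotheses (pil_distr : forall l, is_distr (pil l))
  (pil_gt0 : forall l (a : X l), 0 < pil l a)
  (P_trans : is_trans P)
  (L_trans : forall j, j != i -> is_trans (L j))
  (Lw_row_gt0 : forall a : X i, 0 < \sum_b Lstar_w i (prod_distr pil) P L a b).

Local Notation S := (state X).
Local Notation pi := (prod_distr pil).
Local Notation Z := (Zbold i L).
Local Notation Zblk := (Zi i pi L).
Local Notation Lw := (Lstar_w i pi P L).
Local Notation Ls := (Lstar i pi P L).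
Local Notation Q := (tensor_at i L Ls).
Implicit Types (x y : S) (a b : X i).

Lemma pi_gt0 x : 0 < pi x.
Proof. by apply: prodr_gt0 => l _. Qed.

Lemma state_card_gt0 : (0 < #|S|)%N.
Proof.
apply/card_gt0P; case: (pickP (xpredT : pred S)) => [x _|S0]; first by exists x.
by move: (sum_prod_distr pil pil_distr); rewrite big_pred0 // => /eqP; rewrite eq_sym oner_eq0.
Qed.

Lemma Z_ge0 x y : 0 <= Z x y.
Proof. by apply: prodr_ge0 => j ji; case: (L_trans _ ji) => ->. Qed.

Lemma piZ_ge0 x y : 0 <= pi x * Z x y.
Proof. by rewrite mulr_ge0 ?Z_ge0 // ltW ?pi_gt0. Qed.

Lemma Z_upd x y c : Z x (upd i y c) = Z x y.
Proof. by apply: eq_bigr => j ji; rewrite upd_other. Qed.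

Lemma sum_Z x : \sum_y Z x y = #|X i|%:R.
Proof.
pose G j (c : X j) := if j == i then 1 else L j (x j) c.
transitivity (\sum_(y : S) \prod_j G j (y j)).
  apply: eq_bigr => y _; rewrite (bigD1 i) //= /G eqxx mul1r.
  by apply: eq_bigr => j /negbTE ->.
rewrite sum_prod_dffun (bigD1 i) //= [X in _ * X]big1 => [|j ji]; last first.
  by rewrite /G (negbTE ji); case: (L_trans _ ji).
by rewrite /G eqxx mulr1 sumr_const.
Qed.

Lemma sum_Z_slice x b : \sum_(y : S | y i == b) Z x y = 1.
Proof.
have cardXi : (#|X i|%:R : R) != 0 by rewrite pnatr_eq0 -lt0n; apply/card_gt0P; exists b.
have slice_indep c : \sum_(y : S | y i == c) Z x y = \sum_(y : S | y i == b) Z x y.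
  by apply: sum_slice_indep => y c'; rewrite Z_upd.
apply: (mulIf cardXi); rewrite mul1r -[in RHS](sum_Z x).
rewrite [RHS](partition_big (fun y : S => y i) predT) //=.
by rewrite (eq_bigr _ (fun c _ => slice_indep c)) sumr_const mulr_natr.
Qed.

Lemma Zblk_sum_pi a b : Zblk a b = \sum_(x : S | x i == a) pi x.
Proof. by apply: eq_bigr => x _; rewrite -mulr_sumr sum_Z_slice mulr1. Qed.

Lemma Zblk_indep a b b' : Zblk a b = Zblk a b'.
Proof. by rewrite !Zblk_sum_pi. Qed.

Lemma Zblk_gt0 a b : 0 < Zblk a b.
Proof.
have /card_gt0P[x _] := state_card_gt0.
rewrite Zblk_sum_pi (bigD1 (upd i x a)) ?upd_same //= ltr_pwDl ?pi_gt0 //.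
by apply: sumr_ge0 => y _; rewrite ltW ?pi_gt0.
Qed.

Lemma sum_Zblk_diag : \sum_a Zblk a a = 1.
Proof.
rewrite -(sum_prod_distr pil pil_distr) (partition_big (fun x : S => x i) predT) //=.
by apply: eq_bigr => a _; rewrite Zblk_sum_pi.
Qed.

Lemma P_ge0 x y : 0 <= P x y.
Proof. by case: P_trans. Qed.

Lemma Lw_ge0 a b : 0 <= Lw a b.
Proof. by apply: prodr_ge0 => x _; apply: prodr_ge0 => y _; exact: powR_ge0. Qed.

Lemma Ls_trans : is_trans Ls.
Proof.
split=> [a b|a]; first by rewrite divr_ge0 ?Lw_ge0 // ltW.
by rewrite -mulr_suml divff // gt_eqF.
Qed.

Lemma Ls_eq0 a b : (Ls a b == 0) = (Lw a b == 0).
Proof. by rewrite mulf_eq0 invr_eq0 (gt_eqF (Lw_row_gt0 a)) orbF. Qed.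

Lemma P_gt0_of_Lw {a b x y} : Lw a b != 0 -> x i == a -> y i == b -> Z x y != 0 ->
  0 < P x y.
Proof.
move=> Lw0 xa yb Z0; rewrite lt_neqAle P_ge0 andbT eq_sym.
apply: contra Lw0 => /eqP P0; apply/prodf_eq0; exists x => //; apply/prodf_eq0; exists y => //.
by rewrite P0 powR_eq0 eqxx /= !mulf_neq0 ?invr_eq0 // gt_eqF ?pi_gt0 ?Zblk_gt0.
Qed.

Lemma P_gt0_of_Q x y : Q x y != 0 -> 0 < P x y.
Proof.
rewrite mulf_eq0 negb_or Ls_eq0 => /andP[Lw0 Z0].
exact: P_gt0_of_Lw Lw0 (eqxx _) (eqxx _) Z0.
Qed.

Definition wsum (F : S -> S -> R) (a b : X i) :=
  \sum_(x : S | x i == a) \sum_(y : S | y i == b) pi x * Z x y * F x y.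

Lemma eq_wsum {F G : S -> S -> R} {a b} :
  (forall x y : S, x i == a -> y i == b -> pi x * Z x y * F x y = pi x * Z x y * G x y) ->
  wsum F a b = wsum G a b.
Proof. by move=> FG; apply: eq_bigr => x xa; apply: eq_bigr => y yb; exact: FG. Qed.

Lemma ler_wsum {F G : S -> S -> R} {a b} :
  (forall x y : S, x i == a -> y i == b -> pi x * Z x y * F x y <= pi x * Z x y * G x y) ->
  wsum F a b <= wsum G a b.
Proof. by move=> FG; apply: ler_sum => x xa; apply: ler_sum => y yb; exact: FG. Qed.

Lemma wsumD (F G : S -> S -> R) a b : wsum (fun x y => F x y + G x y) a b = wsum F a b + wsum G a b.
Proof.
rewrite -big_split; apply: eq_bigr => x _.
by rewrite -big_split; apply: eq_bigr => y _; rewrite mulrDr.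
Qed.

Lemma wsumN (F : S -> S -> R) a b : wsum (fun x y => - F x y) a b = - wsum F a b.
Proof.
rewrite -sumrN; apply: eq_bigr => x _.
by rewrite -sumrN; apply: eq_bigr => y _; rewrite mulrN.
Qed.

Lemma wsum_cst (k : R) a b : wsum (fun _ _ => k) a b = Zblk a b * k.
Proof. by rewrite mulr_suml; apply: eq_bigr => x _; rewrite mulr_suml. Qed.

Lemma sum_tensor_blocks (M : X i -> X i -> R) (F : S -> S -> R) :
  \sum_x \sum_y pi x * tensor_at i L M x y * F x y = \sum_a \sum_b M a b * wsum F a b.
Proof.
transitivity (\sum_(x : S) \sum_(y : S) M (x i) (y i) * (pi x * Z x y * F x y)).
  by apply: eq_bigr => x _; apply: eq_bigr => y _; rewrite /tensor_at /Zbold; ring.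
rewrite (sum_blocks i (fun a b (x y : S) => M a b * (pi x * Z x y * F x y))).
apply: eq_bigr => a _; apply: eq_bigr => b _.
by rewrite mulr_sumr; apply: eq_bigr => x _; rewrite mulr_sumr.
Qed.

Lemma Zblk_ln_Lw a b : Lw a b != 0 -> Zblk a b * ln (Lw a b) = wsum (fun x y => ln (P x y)) a b.
Proof.
move=> Lw0.
have factor_gt0 x y : x i == a -> y i == b ->
    0 < P x y `^ (pi x * Z x y / Zblk a b).
  move=> xa yb; have [->|Z0] := eqVneq (Z x y) 0; first by rewrite mulr0 mul0r powRr0.
  by rewrite powR_gt0 // (P_gt0_of_Lw Lw0 xa yb Z0).
rewrite ln_prod => [|x xa]; last by apply: prodr_gt0 => y yb; exact: factor_gt0.
rewrite mulr_sumr; apply: eq_bigr => x xa; rewrite ln_prod => [|y yb]; last exact: factor_gt0.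
rewrite mulr_sumr; apply: eq_bigr => y _; rewrite ln_powR mulrA mulrCA divff ?gt_eqF ?Zblk_gt0 //.
by rewrite mulr1.
Qed.

Lemma wsum_lnZ_indep a b : wsum (fun x y => ln (Z x y)) a b = wsum (fun x y => ln (Z x y)) a a.
Proof. by apply: eq_bigr => x _; apply: sum_slice_indep => y c; rewrite Z_upd. Qed.

(* [wsum_ln_Q_P]: the defining formula of [L_*] makes all block sums of
   [ln (Q / P)] along the row [a] equal to this value. *)
Definition kappa a := wsum (fun x y => ln (Z x y)) a a - Zblk a a * ln (\sum_b Lw a b).

Lemma wsum_ln_Q_P {a b} : Lw a b != 0 -> wsum (fun x y => ln (Q x y / P x y)) a b = kappa a.
Proof.
move=> Lw0; have Lw_gt0 : 0 < Lw a b by rewrite lt_neqAle eq_sym Lw0 Lw_ge0.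
have split_ln x y : x i == a -> y i == b -> pi x * Z x y * ln (Q x y / P x y) =
    pi x * Z x y * (ln (Z x y) - ln (\sum_b Lw a b) + ln (Lw a b) - ln (P x y)).
  move=> xa yb; have [->|Z0] := eqVneq (Z x y) 0; first by rewrite !(mulr0, mul0r).
  have Z_gt0 : 0 < Z x y by rewrite lt_neqAle eq_sym Z0 Z_ge0.
  have P_gt0 := P_gt0_of_Lw Lw0 xa yb Z0.
  have N_gt0 := Lw_row_gt0 a.
  rewrite /tensor_at /Lstar (eqP xa) (eqP yb) -/(Z x y); congr (_ * _).
  rewrite ln_div ?lnM ?lnV ?posrE ?mulr_gt0 ?divr_gt0 ?invr_gt0 //; ring.
rewrite (eq_wsum split_ln) !(wsumD, wsumN) !wsum_cst -Zblk_ln_Lw //.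
by rewrite (Zblk_indep a b a) wsum_lnZ_indep /kappa; ring.
Qed.

Definition Dstar := \sum_x \sum_y pi x * (Q x y * ln (Q x y / P x y)).

Lemma Df_revKL_Q : Df_revKL pi P Q = Dstar%:E.
Proof.
rewrite /Df_revKL -sumEFin; apply: eq_bigr => x _.
rewrite -sumEFin; apply: eq_bigr => y _; rewrite /rev_kl_term.
have [->|Q0] := eqVneq (Q x y) 0; first by rewrite mul0r mulr0 mule0.
by rewrite gt_eqF ?P_gt0_of_Q.
Qed.

Lemma Dstar_sum_kappa : Dstar = \sum_a kappa a.
Proof.
rewrite /Dstar; under eq_bigr do under eq_bigr do rewrite mulrA.
rewrite sum_tensor_blocks; apply: eq_bigr => a _.
rewrite -[kappa a]mul1r -(proj2 Ls_trans a) mulr_suml; apply: eq_bigr => b _.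
have [Ls0|Ls0] := eqVneq (Ls a b) 0; first by rewrite Ls0 !mul0r.
by rewrite wsum_ln_Q_P // -Ls_eq0.
Qed.

Lemma Q_ge0 x y : 0 <= Q x y.
Proof. by rewrite mulr_ge0 ?(proj1 Ls_trans) ?Z_ge0. Qed.

Lemma Q_row_sum x : \sum_y Q x y = 1.
Proof.
rewrite (partition_big (fun y : S => y i) predT) //= -(proj2 Ls_trans (x i)).
apply: eq_bigr => b _; rewrite -[Ls _ b]mulr1 -(sum_Z_slice x b) mulr_sumr.
by apply: eq_bigr => y /eqP yb; rewrite /tensor_at yb.
Qed.

Section Smoothing.
Variables (del eta : R).
Hypotheses (del_gt0 : 0 < del) (del_lt1 : del < 1) (eta_gt0 : 0 < eta) (eta_le1 : eta <= 1).

Definition Pt x y := if P x y == 0 then eta else P x y.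
Definition Rd x y := (1 - del) * Q x y + del / #|S|%:R.
Definition tilt x y := ln (Rd x y) - ln (Pt x y).

Lemma Pt_gt0 x y : 0 < Pt x y.
Proof. by rewrite /Pt; case: eqP => // /eqP P0; rewrite lt_neqAle eq_sym P0 P_ge0. Qed.

Lemma P_le_Pt x y : P x y <= Pt x y.
Proof. by rewrite /Pt; case: eqP => [->|//]; exact: ltW. Qed.

Lemma ln_Pt_le0 x y : 0 <= - ln (Pt x y).
Proof.
by rewrite oppr_ge0 ln_le0 // /Pt; case: eqP => // _; exact: (is_trans_le1 P_trans).
Qed.

Lemma unif_gt0 : 0 < del / #|S|%:R.
Proof. by rewrite divr_gt0 // ltr0n state_card_gt0. Qed.

Lemma Rd_ge_unif x y : del / #|S|%:R <= Rd x y.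
Proof.
by rewrite lerDr mulr_ge0 ?subr_ge0 ?Q_ge0 ?(ltW del_lt1).
Qed.

Lemma Rd_gt0 x y : 0 < Rd x y.
Proof. exact: lt_le_trans unif_gt0 (Rd_ge_unif x y). Qed.

Lemma Rd_ge_Q x y : (1 - del) * Q x y <= Rd x y.
Proof. by rewrite lerDl ltW ?unif_gt0. Qed.

Lemma Rd_trans : is_trans Rd.
Proof.
split=> [x y|x]; first exact/ltW/Rd_gt0.
rewrite big_split /= -mulr_sumr sumr_const -[(del / _) *+ _]mulr_natr.
rewrite divfK ?pnatr_eq0 -?lt0n ?state_card_gt0 //.
by rewrite Q_row_sum mulr1 subrK.
Qed.

(* A block where [L_*] vanishes contains an edge with [P = 0] and positive
   weight; its cost [- ln eta] must pay for [kappa a]. *)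
Hypothesis eta_small : forall a x y, 0 < pi x * Z x y ->
  kappa a - Zblk a a * ln (del / #|S|%:R) <= pi x * Z x y * - ln eta.

Lemma wsum_tilt_regular a b : Lw a b != 0 -> kappa a + Zblk a b * ln (1 - del) <= wsum tilt a b.
Proof.
move=> Lw0; rewrite -(wsum_ln_Q_P Lw0) addrC -wsum_cst -wsumD; apply: ler_wsum => x y xa yb.
have [->|Z0] := eqVneq (Z x y) 0; first by rewrite !(mulr0, mul0r).
rewrite ler_wpM2l ?piZ_ge0 //.
have P_gt0 := P_gt0_of_Lw Lw0 xa yb Z0.
have Q_gt0 : 0 < Q x y.
  by rewrite lt_neqAle eq_sym mulf_neq0 ?Ls_eq0 ?(eqP xa) ?(eqP yb) //= Q_ge0.
rewrite /tilt /Pt (gt_eqF P_gt0) ln_div ?posrE // addrA lerD2r -lnM ?posrE ?subr_gt0 //.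
by rewrite ler_ln ?posrE ?Rd_gt0 ?Rd_ge_Q // mulr_gt0 // subr_gt0.
Qed.

Lemma wsum_tilt_singular a b : Lw a b == 0 -> kappa a <= wsum tilt a b.
Proof.
case/prodf_eq0 => x0 xa /prodf_eq0[y0 yb]; rewrite powR_eq0 => /andP[/eqP P0 ex0].
have piZ_gt0 : 0 < pi x0 * Z x0 y0.
  by rewrite lt_neqAle piZ_ge0 andbT eq_sym; apply: contra ex0 => /eqP ->; rewrite mul0r.
have ln_Rd : Zblk a b * ln (del / #|S|%:R) <= wsum (fun x y => ln (Rd x y)) a b.
  rewrite -wsum_cst; apply: ler_wsum => x y _ _; rewrite ler_wpM2l ?piZ_ge0 //.
  by rewrite ler_ln ?posrE ?unif_gt0 ?Rd_gt0 ?Rd_ge_unif.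
have ln_Pt : pi x0 * Z x0 y0 * - ln eta <= wsum (fun x y => - ln (Pt x y)) a b.
  have term_ge0 x y : 0 <= pi x * Z x y * - ln (Pt x y) by rewrite mulr_ge0 ?piZ_ge0 ?ln_Pt_le0.
  have -> : pi x0 * Z x0 y0 * - ln eta = pi x0 * Z x0 y0 * - ln (Pt x0 y0).
    by rewrite /Pt P0 eqxx.
  exact: (ler_sum2_term (F := fun x y => pi x * Z x y * - ln (Pt x y))).
have := eta_small a _ _ piZ_gt0; rewrite (Zblk_indep a a b) /tilt wsumD.
lra.
Qed.

Lemma wsum_tilt_ge a b : kappa a + Zblk a b * ln (1 - del) <= wsum tilt a b.
Proof.
have [Lw0|Lw0] := boolP (Lw a b == 0); last exact: wsum_tilt_regular.
apply: le_trans (wsum_tilt_singular a b Lw0); rewrite gerDl.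
apply: mulr_ge0_le0; first exact/ltW/Zblk_gt0.
by rewrite ln_le0 // lerBlDr lerDl ltW.
Qed.

Lemma tilt_tensor_ge M : is_trans M ->
  Dstar + ln (1 - del) <= \sum_x \sum_y pi x * tensor_at i L M x y * tilt x y.
Proof.
case=> M0 M1; rewrite sum_tensor_blocks Dstar_sum_kappa.
have -> : ln (1 - del) = \sum_a Zblk a a * ln (1 - del) by rewrite -mulr_suml sum_Zblk_diag mul1r.
rewrite -big_split /=; apply: ler_sum => a _.
rewrite -[X in X <= _]mul1r -[X in X * _ <= _](M1 a) mulr_suml; apply: ler_sum => b _.
by rewrite ler_wpM2l // (Zblk_indep a a b) wsum_tilt_ge.
Qed.

(* Bounds the closing pair [(X_n, X_1)] of [E_n], which is not a transition of the chain. *)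
Definition closing_bound := \sum_x \sum_y - ln (Pt x y).

Lemma path_prob_le_Ki n mu w : is_distr mu -> in_Ki i pil L (emp_pair n w) ->
  path_prob n mu P w <=
  path_prob n mu Rd w * expR (- (n.+1%:R * (Dstar + ln (1 - del))) + closing_bound).
Proof.
move=> [mu0 _] [M [M_trans [_ EM]]].
have P_le x y : 0 <= P x y <= Rd x y * expR (- tilt x y).
  rewrite P_ge0 opprB expRB !lnK ?posrE ?Pt_gt0 ?Rd_gt0 //.
  by rewrite mulrCA divff ?mulr1 ?P_le_Pt // gt_eqF ?Rd_gt0.
apply: le_trans (path_prob_le_tilted n mu P Rd _ w (mu0 _) P_le) _.
have Rd_path_ge0 : 0 <= path_prob n mu Rd w by apply: path_prob_ge0 => // x y; exact/ltW/Rd_gt0.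
rewrite ler_wpM2l //.
have -> : \sum_x \sum_y emp_pair n w x y * - tilt x y =
    - \sum_x \sum_y pi x * tensor_at i L M x y * tilt x y.
  rewrite -sumrN; apply: eq_bigr => x _; rewrite -sumrN; apply: eq_bigr => y _.
  by rewrite EM mulrN.
have tilt_le : tilt (w ord_max) (w ord0) <= - ln (Pt (w ord_max) (w ord0)).
  by rewrite /tilt gerDr; apply: ln_le0; exact: (is_trans_le1 Rd_trans).
have closing_bound_ge : - ln (Pt (w ord_max) (w ord0)) <= closing_bound.
  by apply: (ler_sum2_term (F := fun x y => - ln (Pt x y))) => // x y _ _; exact: ln_Pt_le0.
have := ler_wpM2l (ler0n R n.+1) (tilt_tensor_ge M M_trans).
rewrite ler_expR; lra.
Qed.

Lemma prob_Ki_le n mu : is_distr mu ->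
  prob_Ki n i pil L mu P <= expR (- (n.+1%:R * (Dstar + ln (1 - del))) + closing_bound).
Proof.
move=> mu_distr; apply: le_trans (_ : \sum_(w | `[< in_Ki i pil L (emp_pair n w) >])
    path_prob n mu Rd w * expR (- (n.+1%:R * (Dstar + ln (1 - del))) + closing_bound) <= _).
  by apply: ler_sum => w /asboolP; exact: path_prob_le_Ki.
have pp_ge0 w : 0 <= path_prob n mu Rd w.
  by apply: path_prob_ge0 => [|x y]; [case: mu_distr|exact/ltW/Rd_gt0].
rewrite -mulr_suml -[leRHS]mul1r ler_wpM2r ?expR_ge0 //.
apply: le_trans (_ : \sum_w path_prob n mu Rd w <= _).
  by rewrite [leRHS](bigID (fun w => `[< in_Ki i pil L (emp_pair n w) >])) /= lerDl sumr_ge0.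
rewrite path_prob_sum; last exact: (proj2 Rd_trans).
by case: mu_distr => _ ->.
Qed.

End Smoothing.

Lemma prob_Ki_exp_bound mu : is_distr mu -> forall e, 0 < e ->
  exists K, forall n, prob_Ki n i pil L mu P <= expR (- (n.+1%:R * (Dstar - e)) + K).
Proof.
move=> mu_distr e e_gt0.
pose del := 1 - expR (- e).
have del_gt0 : 0 < del by rewrite subr_gt0 expR_lt1 oppr_lt0.
have del_lt1 : del < 1 by rewrite ltrBlDr ltrDl expR_gt0.
have ln_del : ln (1 - del) = - e by rewrite /del subKr expRK.
have [s [s_ge0 s_dominates]] := exists_scale_dominating
  (w := fun t : X i * S * S => pi t.1.2 * Z t.1.2 t.2)
  (C := fun t => kappa t.1.1 - Zblk t.1.1 t.1.1 * ln (del / #|S|%:R)) (fun t => piZ_ge0 _ _).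
pose eta := expR (- s).
have eta_gt0 : 0 < eta := expR_gt0 _.
have eta_le1 : eta <= 1 by rewrite expR_le1 oppr_le0.
have eta_small a x y : 0 < pi x * Z x y ->
    kappa a - Zblk a a * ln (del / #|S|%:R) <= pi x * Z x y * - ln eta.
  by move=> piZ_gt0; rewrite /eta expRK opprK; exact: (s_dominates (a, x, y)).
exists (closing_bound eta) => n.
have := prob_Ki_le del eta del_gt0 del_lt1 eta_gt0 eta_le1 eta_small n mu mu_distr.
by rewrite ln_del.
Qed.

End OptimalFactor.

Theorem theorem2p12 (R : realType) (d : nat) (X : 'I_d -> finType) (i : 'I_d)
  (pil : forall l, X l -> R)
  (P : state X -> state X -> R)
  (L : forall j, X j -> X j -> R)
  (mu : state X -> R) :
  (forall l, is_distr (pil l)) ->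
  (forall l (a : X l), 0 < pil l a) ->
  is_trans P ->
  is_stationary (prod_distr pil) P ->
  (forall j, j != i -> is_trans (L j) /\ is_stationary (pil j) (L j)) ->
  is_distr mu ->
  (forall a : X i, 0 < \sum_(b : X i) Lstar_w i (prod_distr pil) P L a b) ->
  (limn_esup (fun n : nat =>
      ((n.+1%:R)^-1)%:E * eln (prob_Ki n i pil L mu P))
   <= - Df_revKL (prod_distr pil) P
          (tensor_at i L (Lstar i (prod_distr pil) P L)))%E.
Proof.
(* The bound holds without stationarity of [P], of the [L_j], or of the factors in [K_i]. *)
move=> pil_distr pil_gt0 P_trans _ L_stat mu_distr Lw_row_gt0.
have L_trans j : j != i -> is_trans (L j) by case/L_stat.
rewrite Df_revKL_Q // -EFinN.
apply: limn_esup_eln_le => [n|]; first exact: prob_Ki_ge0.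
by apply: prob_Ki_exp_bound.
Qed.
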